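(* Let $\{\rho_n\}_{n\ge1}$ be probability densities on $\mathbb{R}$ with $\rho_n\ge0$, $\int\rho_n=1$ and $\lim_{n\to\infty}\int_{|t|>\delta}\rho_n(t)\,dt=0$ for all $\delta>0$; for $v\in\mathbb{R}^N$ let $D_{n,v}w(x)=\int_{\mathbb{R}}\frac{w(x+tv)-w(x)}{t}\rho_n(t)\,dt$, and for a multi-index $\bar n=(n_1,\dots,n_N)$ let $\nabla_{\bar n}w(x)\in\mathbb{R}^N$ have components $D_{n_i,e_i}w(x)$ ($e_i$ the standard basis). Let $u\in C^1(\mathbb{R}^N)$, $x_0\in\mathbb{R}^N$, $R>0$, and let $\tilde u$ (obtained from $u$ via a smooth cutoff function) satisfy $\tilde u=u$ on the ball $B_R(x_0)$ and $\tilde u=0$ outside a compact set $K\supset B_R(x_0)$, with $\tilde u\in C^1_0(\mathbb{R}^N)$. Define $$r(x,x_0)=\tilde u(x)-\tilde u(x_0)-(x-x_0)^T\nabla u(x_0),\qquad r_{\bar n}(x,x_0)=\tilde u(x)-\tilde u(x_0)-(x-x_0)^T\nabla_{\bar n}\tilde u(x_0).$$ Then $r_{\bar n}(\cdot,x_0)\to r(\cdot,x_0)$ uniformly on $B_R(x_0)$ as $\min(\bar n)\to\infty$. Consequently the nonlocal Taylor approximant $A_{\bar n}(x)=\tilde u(x_0)+(x-x_0)^T\nabla_{\bar n}\tilde u(x_0)$ converges to the standard Taylor approximant $A(x)=\tilde u(x_0)+(x-x_0)^T\nabla u(x_0)$ uniformly on $B_R(x_0)$ as $\min(\bar n)\t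o\infty$.
   Context: $\min(\bar n)=\min_i n_i$. *)

From HB Require Import structures.
From mathcomp Require Import all_boot all_order all_algebra.
From mathcomp Require Import all_classical all_reals all_analysis.
Set Implicit Arguments. Unset Strict Implicit. Unset Printing Implicit Defensive.
Import Order.TTheory GRing.Theory Num.Theory.
Import numFieldNormedType.Exports.
Local Open Scope classical_set_scope.
Local Open Scope ring_scope.

Definition ebase {R : realType} {N : nat} (i : 'I_N) : 'rV[R]_N := delta_mx 0 i.

Definition dotv {R : realType} {N : nat} (a b : 'rV[R]_N) : R :=
  \sum_(i < N) a 0 i * b 0 i.

Definition eball {R : realType} {N : nat} (x0 : 'rV[R]_N) (r : R) : set 'rV[R]_N :=
  [set x | \sum_(i < N) (x 0 i - x0 0 i) ^+ 2 < r ^+ 2].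

Definition grad {R : realType} {N : nat} (u : 'rV[R]_N -> R) (x : 'rV[R]_N) : 'rV[R]_N :=
  \row_(i < N) 'D_(ebase i) u x.

Definition C1 {R : realType} {N : nat} (u : 'rV[R]_N -> R) : Prop :=
  (forall (i : 'I_N) (x : 'rV[R]_N), derivable u x (ebase i)) /\
  (forall i : 'I_N, continuous (fun x => 'D_(ebase i) u x)).

Definition nl_deriv {R : realType} {N : nat} (rho : R -> R) (v : 'rV[R]_N)
  (w : 'rV[R]_N -> R) (x : 'rV[R]_N) : R :=
  Rintegral (@lebesgue_measure R) setT (fun t => (w (x + t *: v) - w x) / t * rho t).

Definition nl_grad {R : realType} {N : nat} (rho : nat -> R -> R) (nbar : 'I_N -> nat)
  (w : 'rV[R]_N -> R) (x : 'rV[R]_N) : 'rV[R]_N :=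
  \row_(i < N) nl_deriv (rho (nbar i)) (ebase i) w x.

(* Since [ut = u] near [x0], both have the same partial derivatives at [x0],
   and [rn nbar x - rr x = - (x - x0) . (nl_grad ut x0 - grad ut x0)]; on the
   ball this is at most [N r max_i |D_(nbar i, e_i) ut x0 - d_i ut x0|], so it
   suffices that each nonlocal partial derivative converges.  Along the line
   [f t = ut (x0 + t e_i)] the difference quotient [(f t - f 0) / t] is within
   [eps] of [d_i ut x0] for [|t| <= delta], and is bounded by [2 sup|f| / delta
   + |d_i ut x0|] elsewhere, [f] being bounded since [ut] has compact support.
   As the mass of [rho_n] outside [(-delta, delta)] tends to [0], the
   [rho_n]-averages of the difference quotient converge to [d_i ut x0]. *)

From HB Require Import structures.
From mathcomp Require Import all_boot all_order all_algebra.
From mathcomp Require Import all_classical all_reals all_analysis.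
From mathcomp Require Import measurable_realfun.
From mathcomp Require Import ring.
Set Implicit Arguments.
Unset Strict Implicit.
Unset Printing Implicit Defensive.

Import Order.TTheory GRing.Theory Num.Theory.
Import numFieldNormedType.Exports.
Local Open Scope classical_set_scope.
Local Open Scope ring_scope.
Local Notation mu := lebesgue_measure.

Lemma measurable_normr_gt (R : realType) (delta : R) :
  measurable [set t : R | delta < `|t|].
Proof.
have := @normr_measurable R setT measurableT _ (@measurable_itv _ `]delta, +oo[).
by rewrite setTI; congr measurable; apply/seteqP; split => t /=; rewrite in_itv /= andbT.
Qed.

Lemma Rintegral_setD1 (R : realType) (D : set R) (r : R) (f : R -> R) :
  measurable (D `\ r) -> measurable_fun (D `\ r) f ->
  \int[mu]_(t in D `\ r) f t = \int[mu]_(t in D) f t.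
Proof. by move=> mD mf; rewrite /Rintegral integral_setD1 //; exact/measurable_EFinP. Qed.

Lemma Rintegral_indic_setD1 (R : realType) (S : set R) (r : R) (f : R -> R) :
  measurable S -> measurable_fun setT f ->
  \int[mu]_(t in setT `\ r) (\1_S t * f t) = \int[mu]_(t in S) f t.
Proof.
move=> mS mf; rewrite Rintegral_setD1 //; [|exact: measurableD|].
  rewrite [RHS]Rintegral_mkcond; apply: eq_Rintegral => t _.
  by rewrite /patch indicE; case: (t \in S); rewrite ?mul1r ?mul0r.
by apply: measurable_funM; [exact: measurable_indic | exact: measurable_funTS].
Qed.

Section ProbabilityDensity.
Context {R : realType}.
Variable rho : R -> R.
Hypotheses (rho_meas : measurable_fun setT rho) (rho_ge0 : forall t, 0 <= rho t)
  (rho_int1 : (\int[mu]_(t in setT) (rho t)%:E = 1)%E).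

Lemma integrable_density : mu.-integrable (setT : set R) (EFin \o rho).
Proof.
apply/integrableP; split; first exact/measurable_EFinP.
by under eq_integral do rewrite /= ger0_norm//; rewrite rho_int1 ltry.
Qed.

Lemma integrable_bounded_mul_density (D : set R) (h : R -> R) (c : R) :
  measurable D -> measurable_fun D h -> (forall t, D t -> `|h t| <= c) ->
  mu.-integrable D (EFin \o (fun t => h t * rho t)).
Proof.
move=> mD mh hc.
have hb : [bounded h t | t in D].
  apply: filterS (nbhs_pinfty_ge (num_real c)) => M cM t Dt /=.
  exact: le_trans (hc t Dt) cM.
have rhoD : mu.-integrable D (EFin \o rho) by apply: integrableS integrable_density.
have := @integrableMr _ _ _ mu D mD h (EFin \o rho) mh hb rhoD.
by apply: eq_integrable.
Qed.

Lemma Rintegral_scaled_density_setD0 (c : R) :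
  \int[mu]_(t in setT `\ 0) (c * rho t) = c.
Proof.
have mD0 : measurable (setT `\ (0 : R)) by exact: measurableD.
rewrite RintegralZl //; last exact: integrableS integrable_density.
by rewrite Rintegral_setD1 //; [rewrite /Rintegral rho_int1 mulr1 | exact: measurable_funTS].
Qed.

(* [G] is only controlled off [0]: for a difference quotient, [G 0] is the
   junk value [(f 0 - f 0) / 0 = 0]. *)
Lemma dist_Rintegral_density_le (G : R -> R) (d c : R) :
  measurable_fun (setT `\ (0 : R)) G ->
  (forall t, t != 0 -> `|G t - d| <= c) ->
  `|\int[mu]_(t in setT) (G t * rho t) - d|
    <= \int[mu]_(t in setT `\ 0) (`|G t - d| * rho t).
Proof.
move=> mG G_bnd; set D0 := setT `\ (0 : R).
have mD0 : measurable D0 by exact: measurableD.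
have int_mull h c' := @integrable_bounded_mul_density D0 h c' mD0.
have {}G_bnd t : D0 t -> `|G t - d| <= c by move=> [_ /eqP]; exact: G_bnd.
have mGd : measurable_fun D0 (fun t => G t - d) by apply: measurable_funB.
rewrite -(@Rintegral_setD1 _ _ 0) //; last first.
  by apply: measurable_funM => //; exact: measurable_funTS.
rewrite -{1}(Rintegral_scaled_density_setD0 d) -RintegralB //; first last.
- exact: int_mull (measurable_cst d) (fun t _ => lexx `|d|).
- apply: (int_mull _ (`|d| + c) mG) => t Dt.
  by rewrite -[G t](subrK d) (le_trans (ler_normD _ _)) // addrC lerD2l G_bnd.
under eq_Rintegral do rewrite -mulrBl.
apply: le_trans (le_normr_Rintegral (mu := mu) mD0 (int_mull _ _ mGd G_bnd)) _.
by under eq_Rintegral do rewrite normrM (ger0_norm (rho_ge0 _)).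
Qed.

Lemma dist_Rintegral_density_le_tail (G : R -> R) (d eps delta K : R) :
  measurable_fun (setT `\ (0 : R)) G -> 0 <= eps -> 0 <= K ->
  (forall t, t != 0 -> `|t| <= delta -> `|G t - d| <= eps) ->
  (forall t, delta < `|t| -> `|G t - d| <= K) ->
  `|\int[mu]_(t in setT) (G t * rho t) - d|
    <= eps + K * \int[mu]_(t in [set t | delta < `|t|]) rho t.
Proof.
move=> mG eps_ge0 K_ge0 G_near G_far.
set D0 := setT `\ (0 : R); set S := [set t : R | delta < `|t|].
have mD0 : measurable D0 by exact: measurableD.
have mS : measurable S by exact: measurable_normr_gt.
have int_mull h c := @integrable_bounded_mul_density D0 h c mD0.
have S1_bnd t : `|\1_S t : R| <= 1.
  by rewrite indicE; case: (_ \in S); rewrite ?normr1 ?normr0.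
have G_le t : t != 0 -> `|G t - d| <= eps + K * \1_S t.
  move=> t_neq0; rewrite indicE; case: (boolP (t \in S)) => [|/negP].
    by rewrite inE mulr1 => /G_far /le_trans; apply; rewrite lerDr.
  by rewrite inE mulr0 addr0 => /negP; rewrite -leNgt => /(G_near _ t_neq0).
have G_bnd t : t != 0 -> `|G t - d| <= eps + K.
  by move=> /G_le /le_trans; apply; rewrite lerD2l ler_piMr // (le_trans (ler_norm _)).
apply: le_trans (dist_Rintegral_density_le mG G_bnd) _.
have mS1 : measurable_fun D0 (\1_S : R -> R) by exact: measurable_indic.
apply: (@le_trans _ _ (\int[mu]_(t in D0) ((eps + K * \1_S t) * rho t))).
  apply: le_Rintegral => //.
  - apply: (int_mull _ (eps + K)) => [|t [_ /eqP /G_bnd]]; last by rewrite normr_id.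
    by apply: measurableT_comp => //; apply: measurable_funB.
  - apply: (int_mull _ (eps + K)) => [|t _].
      by apply: measurable_funD => //; exact: measurable_funM.
    rewrite indicE; case: (_ \in S);
      by rewrite ?mulr1 ?mulr0 ?addr0 ger0_norm ?addr_ge0 ?lerDl.
  - by move=> t [_ /eqP t_neq0]; rewrite ler_wpM2r // G_le.
under eq_Rintegral do rewrite mulrDl.
rewrite RintegralD //; last first.
- apply: (int_mull _ `|K|) => [|t _]; first exact: measurable_funM.
  by rewrite normrM ler_piMr.
- exact: int_mull (measurable_cst eps) (fun t _ => lexx `|eps|).
rewrite Rintegral_scaled_density_setD0 lerD2l.
under eq_Rintegral do rewrite -mulrA.
rewrite RintegralZl // ?Rintegral_indic_setD1 //.
exact: int_mull mS1 (fun t _ => S1_bnd t).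
Qed.

End ProbabilityDensity.

Lemma difference_quotient_far_le (R : realType) (f : R -> R) (C d delta t : R) :
  (forall s, `|f s| <= C) -> 0 < delta -> delta < `|t| ->
  `|(f t - f 0) / t - d| <= 2 * C / delta + `|d|.
Proof.
move=> f_bnd delta_gt0 delta_lt; have t_gt0 : 0 < `|t| by exact: lt_trans delta_lt.
have C_ge0 : 0 <= C by exact: le_trans (f_bnd 0).
have diff_le : `|f t - f 0| <= 2 * C.
  by rewrite mulr_natl mulr2n (le_trans (ler_normB _ _)) // lerD.
rewrite (le_trans (ler_normB _ _)) // lerD2r normrM normfV.
apply: le_trans (ler_wpM2r _ diff_le) _; first by rewrite invr_ge0.
by rewrite ler_wpM2l ?mulr_ge0 // lef_pV2 ?posrE // ltW.
Qed.

Lemma line_continuous (R : realType) (V : normedModType R) (w : V -> R) (x v : V) :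
  (forall t : R, derivable w (x + t *: v) v) -> continuous (fun t : R => w (x + t *: v)).
Proof.
move=> w_der t; apply/differentiable_continuous/derivable1_diffP/derivable1P.
have -> : (fun h : R => w (x + (h *: 1 + t) *: v)) = (fun h => w (h *: v + (x + t *: v))).
  by apply/funext => h; rewrite scaler1 scalerDl addrCA addrA.
by rewrite -derivable1P.
Qed.

Lemma compact_support_line_bounded (R : realType) (V : normedModType R)
    (w : V -> R) (K : set V) (x v : V) :
  compact K -> (forall y, ~ K y -> w y = 0) -> v != 0 ->
  continuous (fun t : R => w (x + t *: v)) ->
  exists C, forall t : R, `|w (x + t *: v)| <= C.
Proof.
move=> K_compact w_supp v_neq0 w_cont.
have [M [_ M_bnd]] := compact_bounded K_compact.
have K_bnd y : K y -> `|y| <= `|M| + 1.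
  by move=> /(M_bnd (`|M| + 1)) -> //; rewrite (le_lt_trans (ler_norm _)) ?ltrDl.
have v_gt0 : 0 < `|v| by rewrite normr_gt0.
set T := (`|M| + 1 + `|x|) / `|v|.
have T_ge0 : 0 <= T by rewrite divr_ge0.
have w_far t : T < `|t| -> w (x + t *: v) = 0.
  move=> T_lt; apply: w_supp => /K_bnd; apply/negP; rewrite -ltNge (addrC x).
  apply: lt_le_trans (lerB_normD _ x); rewrite normrZ ltrBrDr.
  by rewrite -ltr_pdivrMr.
have w_cont_itv : {within `[- T, T], continuous (fun t => `|w (x + t *: v)|)}.
  apply: continuous_subspaceT => t.
  by apply: continuous_comp (w_cont t) _; exact: norm_continuous.
have [c _ c_max] := EVT_max (ge0_cp T_ge0).2 w_cont_itv.
exists `|w (x + c *: v)| => t; have [t_le|/w_far ->] := leP `|t| T.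
  by apply: c_max; rewrite in_itv /= -ler_norml.
by rewrite normr0.
Qed.

Section ApproximateIdentity.
Context {R : realType}.
Variable rho : nat -> R -> R.
Hypotheses (rho_meas : forall n, measurable_fun setT (rho n))
  (rho_ge0 : forall n t, 0 <= rho n t)
  (rho_int1 : forall n, (\int[mu]_(t in setT) (rho n t)%:E = 1)%E)
  (rho_tail : forall delta : R, 0 < delta ->
     (fun n => (\int[mu]_(t in [set t : R | (delta < `|t|)%R]) (rho n t)%:E)%E) @ \oo --> 0%E).

Lemma density_tail_cvg0 (delta : R) : 0 < delta ->
  (fun n => \int[mu]_(t in [set t | delta < `|t|]) rho n t) @ \oo --> 0.
Proof. by move=> /rho_tail /fine_cvg. Qed.

Lemma Rintegral_difference_quotient_cvg (f : R -> R) (C d : R) :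
  continuous f -> (forall t, `|f t| <= C) ->
  h^-1 * (f h - f 0) @[h --> 0^'] --> d ->
  (fun n => \int[mu]_(t in setT) ((f t - f 0) / t * rho n t)) @ \oo --> d.
Proof.
move=> f_cont f_bnd f_der.
have mG : measurable_fun (setT `\ (0 : R)) (fun t => (f t - f 0) / t).
  apply: open_continuous_measurable_fun.
    rewrite setTD; apply: closed_openC; apply: accessible_closed_set1.
    exact/hausdorff_accessible/Rhausdorff.
  move=> t; rewrite inE => -[_ /eqP t_neq0].
  by apply: cvgM; [apply: cvgB; [exact: f_cont | exact: cvg_cst] | exact: cvgV].
apply/cvgrPdist_le => eps eps_gt0.
have eps2_gt0 : 0 < eps / 2 by rewrite divr_gt0.
move/cvgrPdist_le: f_der => /(_ _ eps2_gt0) [delta /= delta_gt0 f_der_near].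
have G_near t : t != 0 -> `|t| <= delta / 2 -> `|(f t - f 0) / t - d| <= eps / 2.
  move=> t_neq0 t_le; rewrite distrC mulrC; apply: f_der_near => //=.
  by rewrite sub0r normrN (le_lt_trans t_le) // ltr_pdivrMr // ltr_pMr // ltr1n.
set K := 2 * C / (delta / 2) + `|d|.
have K_ge0 : 0 <= K.
  by rewrite addr_ge0 // divr_ge0 ?mulr_ge0 ?(le_trans _ (f_bnd 0)) // ltW ?divr_gt0.
have G_far t : delta / 2 < `|t| -> `|(f t - f 0) / t - d| <= K.
  by apply: difference_quotient_far_le => //; rewrite divr_gt0.
have tail_small : \forall n \near \oo,
    K * \int[mu]_(t in [set t | delta / 2 < `|t|]) rho n t <= eps / 2.
  apply: cvgr_le eps2_gt0; rewrite -(mulr0 K); apply: cvgM; first exact: cvg_cst.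
  by apply: density_tail_cvg0; rewrite divr_gt0.
near=> n; rewrite distrC.
have := dist_Rintegral_density_le_tail (rho_meas n) (rho_ge0 n) (rho_int1 n)
  mG (ltW eps2_gt0) K_ge0 G_near G_far.
move/le_trans; apply.
by rewrite [leRHS]splitr lerD2l; near: n.
Unshelve. all: by end_near. Qed.

Lemma nl_deriv_cvg (N : nat) (v : 'rV[R]_N) (w : 'rV[R]_N -> R) (x : 'rV[R]_N) :
  (forall t : R, derivable w (x + t *: v) v) ->
  (exists C, forall t : R, `|w (x + t *: v)| <= C) ->
  (fun n => nl_deriv (rho n) v w x) @ \oo --> 'D_v w x.
Proof.
move=> w_der [C w_bnd].
have line0 : w (x + 0 *: v) = w x by rewrite scale0r addr0.
rewrite /nl_deriv -line0.
apply: (@Rintegral_difference_quotient_cvg _ C) => //; first exact: line_continuous.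
have der_x := w_der 0; rewrite scale0r addr0 in der_x.
rewrite line0; suff -> : (fun h : R => h^-1 * (w (x + h *: v) - w x)) =
    (fun h => h^-1 *: ((w \o shift x) (h *: v) - w x)) by exact: der_x.
by apply/funext => h /=; rewrite (addrC x).
Qed.

End ApproximateIdentity.

Lemma ebase_neq0 (R : realType) (N : nat) (i : 'I_N) : ebase i != 0 :> 'rV[R]_N.
Proof. by apply/eqP => /rowP /(_ i); rewrite !mxE !eqxx /= => /eqP; rewrite oner_eq0. Qed.

Lemma eball_coord_lt (R : realType) (N : nat) (x0 x : 'rV[R]_N) (r : R) (i : 'I_N) :
  0 < r -> eball x0 r x -> `|x 0 i - x0 0 i| < r.
Proof.
move=> r_gt0 x_in; rewrite -(@ltr_pXn2r _ 2) // ?nnegrE ?ltW //.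
rewrite real_normK ?num_real //; apply: le_lt_trans x_in; rewrite (bigD1 i) //= lerDl.
by apply: sumr_ge0 => j _; exact: sqr_ge0.
Qed.

Lemma eball_nbhs (R : realType) (N : nat) (x0 : 'rV[R]_N) (r : R) :
  0 < r -> \forall x \near x0, eball x0 r x.
Proof.
move=> r_gt0; set e := r ^+ 2 / N.+1%:R.
have e_gt0 : 0 < e by rewrite divr_gt0 ?exprn_gt0.
have coord_near i : \forall x \near x0, ((x : 'rV[R]_N) 0 i - x0 0 i) ^+ 2 < e.
  have : (fun x : 'rV[R]_N => (x 0 i - x0 0 i) ^+ 2) @ x0 --> (x0 0 i - x0 0 i) ^+ 2.
    have coord_cvg : (fun x : 'rV[R]_N => x 0 i) @ x0 --> x0 0 i.
      exact: coord_continuous.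
    apply: (@cvg_comp _ _ _ _ (fun y => y ^+ 2)); last exact: exprn_continuous.
    exact: cvgB coord_cvg (cvg_cst _).
  by rewrite subrr expr0n => /cvgr_lt; apply.
apply: filterS (filter_forall _ coord_near) => x x_near.
apply: (@le_lt_trans _ _ (\sum_(i < N) e)); first by apply: ler_sum => i _; exact/ltW.
rewrite sumr_const card_ord -mulr_natl mulrCA gtr_pMr ?exprn_gt0 //.
by rewrite ltr_pdivrMr // mul1r ltr_nat.
Qed.

Lemma dotvBr (R : realType) (N : nat) (a b c : 'rV[R]_N) :
  dotv a (b - c) = dotv a b - dotv a c.
Proof. by rewrite /dotv -sumrB; apply: eq_bigr => j _; rewrite !mxE mulrBr. Qed.

Lemma normr_dotv_le (R : realType) (N : nat) (a b : 'rV[R]_N) (A B : R) :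
  (forall i, `|a 0 i| <= A) -> (forall i, `|b 0 i| <= B) ->
  `|dotv a b| <= N%:R * (A * B).
Proof.
move=> a_le b_le; apply: le_trans (ler_norm_sum _ _ _) _.
apply: le_trans (ler_sum (G := fun _ => A * B) _ _) _.
  by move=> j _; rewrite normrM ler_pM.
by rewrite sumr_const card_ord mulr_natl.
Qed.

Lemma eball_dotv_row_small (R : realType) (N : nat) (x0 : 'rV[R]_N) (r : R)
    (c : 'I_N -> nat -> R) :
  0 < r -> (forall i, c i @ \oo --> 0) ->
  forall eps, 0 < eps -> exists M, forall nbar : 'I_N -> nat,
    (forall i, (M <= nbar i)%N) ->
    forall x, eball x0 r x -> `|dotv (x - x0) (\row_i c i (nbar i))| < eps.
Proof.
move=> r_gt0 c_cvg eps eps_gt0; set e := eps / (N%:R * r + 1).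
have Nr_gt0 : 0 < N%:R * r + 1 by rewrite ltr_wpDl // mulr_ge0 // ltW.
have e_gt0 : 0 < e by rewrite divr_gt0.
have [M _ c_small] : \forall n \near \oo, forall i, `|c i n| < e.
  by apply: filter_forall => i; move: (c_cvg i) => /cvgr0Pnorm_lt; apply.
exists M => nbar nbar_ge x x_in.
apply: le_lt_trans (normr_dotv_le (A := r) (B := e) _ _) _.
- by move=> i; rewrite !mxE; exact/ltW/eball_coord_lt.
- by move=> i; rewrite mxE; exact/ltW/c_small/nbar_ge.
by rewrite /e mulrA mulrCA gtr_pMr // ltr_pdivrMr // mul1r ltrDl.
Qed.

Theorem theorem7 (R : realType) (N : nat) (rho : nat -> R -> R)
  (rho_meas : forall n, measurable_fun setT (rho n))
  (rho_ge0 : forall n t, 0 <= rho n t)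
  (rho_int1 : forall n, (\int[@lebesgue_measure R]_(t in setT) (rho n t)%:E = 1)%E)
  (rho_tail : forall delta : R, 0 < delta ->
     (fun n => (\int[@lebesgue_measure R]_(t in [set t : R | (delta < `|t|)%R]) (rho n t)%:E)%E)
       @ \oo --> 0%E)
  (u ut : 'rV[R]_N -> R) (x0 : 'rV[R]_N) (r : R)
  (u_C1 : C1 u) (r_gt0 : 0 < r)
  (ut_C1 : C1 ut)
  (ut_eq : forall x, eball x0 r x -> ut x = u x)
  (ut_supp : exists K : set 'rV[R]_N,
      compact K /\ eball x0 r `<=` K /\ (forall x, ~ K x -> ut x = 0)) :
  let rr := fun x => ut x - ut x0 - dotv (x - x0) (grad u x0) in
  let rn := fun (nbar : 'I_N -> nat) x =>
              ut x - ut x0 - dotv (x - x0) (nl_grad rho nbar ut x0) in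
  let A := fun x => ut x0 + dotv (x - x0) (grad u x0) in
  let An := fun (nbar : 'I_N -> nat) x => ut x0 + dotv (x - x0) (nl_grad rho nbar ut x0) in
  (forall eps : R, 0 < eps -> exists M : nat, forall nbar : 'I_N -> nat,
      (forall i, (M <= nbar i)%N) ->
      forall x, eball x0 r x -> `|rn nbar x - rr x| < eps) /\
  (forall eps : R, 0 < eps -> exists M : nat, forall nbar : 'I_N -> nat,
      (forall i, (M <= nbar i)%N) ->
      forall x, eball x0 r x -> `|An nbar x - A x| < eps).
Proof.
move=> rr rn A An; have [K [K_compact [_ ut_supp0]]] := ut_supp.
(* [u] enters only through [grad u x0]. *)
have D_eq i : 'D_(ebase i) u x0 = 'D_(ebase i) ut x0.
  by apply: near_eq_derive; apply: filterS (eball_nbhs x0 r_gt0) => y /ut_eq ->.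
have nl_cvg i :
    (fun n => nl_deriv (rho n) (ebase i) ut x0 - 'D_(ebase i) u x0) @ \oo --> 0.
  rewrite D_eq -(subrr ('D_(ebase i) ut x0)); apply: cvgB (cvg_cst _).
  have ut_der t : derivable ut (x0 + t *: ebase i) (ebase i) by exact: ut_C1.1.
  apply: (nl_deriv_cvg rho_meas rho_ge0 rho_int1 rho_tail ut_der).
  exact: compact_support_line_bounded K_compact ut_supp0 (ebase_neq0 R i)
    (line_continuous ut_der).
have grad_diff nbar : nl_grad rho nbar ut x0 - grad u x0 =
    \row_i (nl_deriv (rho (nbar i)) (ebase i) ut x0 - 'D_(ebase i) u x0).
  by apply/rowP => i; rewrite !mxE.
have small := eball_dotv_row_small x0 r_gt0 nl_cvg.
split=> eps /small [M small_M]; exists M => nbar nbar_ge x /(small_M _ nbar_ge).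
- have -> : rn nbar x - rr x = - dotv (x - x0) (nl_grad rho nbar ut x0 - grad u x0).
    by rewrite dotvBr /rn /rr; ring.
  by rewrite normrN grad_diff.
- have -> : An nbar x - A x = dotv (x - x0) (nl_grad rho nbar ut x0 - grad u x0).
    by rewrite dotvBr /An /A; ring.
  by rewrite grad_diff.
Qed.
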